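(* Let $k\geqslant 2$ be an integer, and in the braid group $B_5$ let $\delta_3=\sigma_2\sigma_1$, $\Delta_3=\sigma_2\sigma_1\sigma_2$ and $\beta_k=\delta_3^{3k+1}\sigma_4^{2k+2}\sigma_3\sigma_4^{2k-1}$. Then the left normal form of $\beta_k$ is \[\beta_k=(\Delta_3\sigma_4)^{2k}(\delta_3\sigma_4\sigma_3\sigma_4)(\sigma_3\sigma_4)(\sigma_4)^{2k-3}.\] In particular $\inf\beta_k=0$ and $\sup\beta_k=4k-1$.
   Context: $B_5$ has generators $\sigma_1,\dots,\sigma_4$ with the standard braid relations; $B_5^+$ is the positive braid monoid, $\Delta=(\sigma_1\sigma_2\sigma_3\sigma_4)(\sigma_1\sigma_2\sigma_3)(\sigma_1\sigma_2)\sigma_1$. Write $x\preccurlyeq y$ iff $x^{-1}y\in B_5^+$; simple braids are those $x$ with $1\preccurlyeq x\preccurlyeq\Delta$. Simple $s_1,s_2$ are left-weighted if no generator $\sigma_i$ makes both $s_1\sigma_i$ and $\sigma_i^{-1}s_2$ simple. The left normal form of $x$ is the unique expression $x=\Delta^p x_1\cdots x_r$ with $x_i$ simple, different from $1$ and $\Delta$, and consecutive factors left-weighted; $\inf x=p$ and $\sup x=p+r$. *)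

(* Braid group B_5 presented by words in sigma_1..sigma_4
   and their inverses, modulo the congruence generated by free cancellation
   and the standard braid relations. *)
From mathcomp Require Import all_boot.
From mathcomp Require Import ssralg ssrint.

Set Implicit Arguments.
Unset Strict Implicit.
Unset Printing Implicit Defensive.

(* generator sigma_{i+1} is represented by i : 'I_4 *)
Definition gen := 'I_4.
(* a letter (g, false) is sigma_g, (g, true) is sigma_g^{-1} *)
Definition letter := (gen * bool)%type.
Definition word := seq letter.

Definition pos (g : gen) : letter := (g, false).
Definition sg (i : nat) : word := [:: pos (inord i.-1)].

Definition winv (w : word) : word := rev (map (fun l => (l.1, ~~ l.2)) w).
Definition wpow (w : word) (n : nat) : word := flatten (nseq n w).

Inductive beq : word -> word -> Prop :=
| beq_refl w : beq w w
| beq_sym u v : beq u v -> beq v u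
| beq_trans u v w : beq u v -> beq v w -> beq u w
| beq_cat u u' v v' : beq u u' -> beq v v' -> beq (u ++ v) (u' ++ v')
| beq_free (g : gen) (b : bool) : beq [:: (g, b); (g, ~~ b)] [::]
| beq_comm (i j : gen) : (i.+1 < j)%N -> beq [:: pos i; pos j] [:: pos j; pos i]
| beq_braid (i j : gen) : (val j = (val i).+1)%N ->
    beq [:: pos i; pos j; pos i] [:: pos j; pos i; pos j].

Definition positive (x : word) : Prop :=
  exists w : seq gen, beq x (map pos w).

Definition prec (x y : word) : Prop := positive (winv x ++ y).

Definition Delta : word :=
  sg 1 ++ sg 2 ++ sg 3 ++ sg 4 ++ sg 1 ++ sg 2 ++ sg 3 ++ sg 1 ++ sg 2 ++ sg 1.

Definition simple (x : word) : Prop := prec [::] x /\ prec x Delta.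

Definition left_weighted (s1 s2 : word) : Prop :=
  forall g : gen, ~ (simple (s1 ++ [:: pos g]) /\ simple (winv [:: pos g] ++ s2)).

Definition Delta_pow (p : int) : word :=
  match p with
  | Posz n => wpow Delta n
  | Negz n => wpow (winv Delta) n.+1
  end.

Definition is_LNF (x : word) (p : int) (fs : seq word) : Prop :=
  beq x (Delta_pow p ++ flatten fs) /\
  (forall s, s \in fs -> simple s /\ ~ beq s [::] /\ ~ beq s Delta) /\
  (forall i, (i.+1 < size fs)%N -> left_weighted (nth [::] fs i) (nth [::] fs i.+1)).

(* inf x = p and sup x = p + r, read off the (unique) left normal form *)
Definition has_inf (x : word) (p : int) : Prop := exists fs, is_LNF x p fs.
Definition has_sup (x : word) (s : int) : Prop :=
  exists p fs, is_LNF x p fs /\ s = (p + (size fs)%:Z)%R.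

Definition delta3 : word := sg 2 ++ sg 1.
Definition Delta3 : word := sg 2 ++ sg 1 ++ sg 2.

Definition beta (k : nat) : word :=
  wpow delta3 (3 * k + 1) ++ wpow (sg 4) (2 * k + 2) ++ sg 3 ++ wpow (sg 4) (2 * k - 1).

Definition beta_factors (k : nat) : seq word :=
  nseq (2 * k) (Delta3 ++ sg 4) ++
  [:: delta3 ++ sg 4 ++ sg 3 ++ sg 4; sg 3 ++ sg 4] ++
  nseq (2 * k - 3) (sg 4).

(* The equality of braids is a bookkeeping of three relations: delta3^3 = Delta3^2,
   and both delta3 and Delta3 commute with sigma4. Each factor is simple because it
   can be completed to a positive word for Delta by explicit braid moves, and it is
   neither 1 nor Delta by its exponent sum. For left-weightedness, map B_5 to
   S_5 x Z: a positive braid has at least as many letters as its permutation has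
   inversions. For consecutive factors x, y and each generator s, this bound fails
   for (x s)^-1 Delta or for s^-1 y, so x s and s^-1 y are not both simple. *)

From mathcomp Require Import all_boot.
From mathcomp Require Import ssralg ssrint zmodp.
From Stdlib Require Import Setoid Lia.
From mathcomp Require Import zify.

Set Implicit Arguments.
Unset Strict Implicit.
Unset Printing Implicit Defensive.

Add Parametric Relation : word beq
  reflexivity proved by beq_refl
  symmetry proved by beq_sym
  transitivity proved by beq_trans as beq_rel.

#[local] Hint Resolve beq_refl : core.

Add Parametric Morphism : (@cat letter) with signature beq ==> beq ==> beq as cat_beq.
Proof. by move=> u u' eu v v' ev; apply: beq_cat. Qed.

Add Parametric Morphism : positive with signature beq ==> iff as positive_beq.
Proof.
move=> x y exy; split=> -[w ew]; exists w.
  exact: beq_trans (beq_sym exy) ew.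
exact: beq_trans exy ew.
Qed.

Lemma beq_winv_cat (w : word) : beq (winv w ++ w) [::].
Proof.
elim: w => [|[g b] w IHw] //.
rewrite /winv /= rev_cons -cats1 -/(winv w) -catA.
have cancel_gb : beq ([:: (g, ~~ b)] ++ (g, b) :: w) w.
  by have := beq_cat (beq_free g (~~ b)) (beq_refl w); rewrite negbK.
by rewrite cancel_gb.
Qed.

Lemma wpowS w n : wpow w n.+1 = w ++ wpow w n.
Proof. by []. Qed.

Lemma wpowD w m n : wpow w (m + n) = wpow w m ++ wpow w n.
Proof. by elim: m => [|m IHm] //; rewrite addSn !wpowS IHm catA. Qed.

Lemma wpowM w m n : wpow w (m * n) = wpow (wpow w m) n.
Proof. by elim: n => [|n IHn]; rewrite ?muln0 // mulnS wpowD IHn. Qed.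

Add Parametric Morphism : wpow with signature beq ==> eq ==> beq as wpow_beq.
Proof. by move=> u v euv; elim=> [|n IHn] //; apply: beq_cat. Qed.

Lemma wpow_commute a b n : beq (a ++ b) (b ++ a) -> beq (wpow a n ++ b) (b ++ wpow a n).
Proof.
move=> eab; elim: n => [|n IHn]; first by rewrite cats0.
by rewrite wpowS -catA IHn catA eab -catA.
Qed.

Lemma wpow_cat a b n : beq (a ++ b) (b ++ a) -> beq (wpow (a ++ b) n) (wpow a n ++ wpow b n).
Proof.
move=> eab; elim: n => [|n IHn] //.
by rewrite !wpowS IHn -!catA (catA b) -(wpow_commute n eab) !catA.
Qed.

Lemma path_nseq (T : Type) (e : rel T) x n : e x x -> path e x (nseq n x).
Proof. by move=> exx; elim: n => //= n ->; rewrite exx. Qed.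

Lemma sorted_nseq_cat (T : Type) (e : rel T) a b c d n m :
  e a a -> e a b -> e b c -> e c d -> e d d ->
  sorted e (nseq n a ++ [:: b, c & nseq m d]).
Proof.
move=> eaa eab ebc ecd edd.
have path_cd : path e c (nseq m d) by case: m => //= m; rewrite ecd path_nseq.
case: n => [|n] /=; first by rewrite ebc path_cd.
have last_a : last a (nseq n a) = a by elim: n.
by rewrite cat_path last_a path_nseq //= eab ebc path_cd.
Qed.

(* The code [i] stands for sigma_(i+1). Reducing with [inZp] rather than [inord]
   keeps words built from codes computable, so checks on them run by [vm_compute]. *)
Definition pword (s : seq nat) : word := map (fun i => pos (inZp i)) s.

Lemma sg_pword i : 0 < i <= 4 -> sg i = pword [:: i.-1].
Proof.
case/andP=> i_gt0 i_le4; congr [:: pos _]; apply: val_inj => /=.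
by rewrite inordK; [apply/esym/modn_small | ]; lia.
Qed.

Lemma pword_cat s t : pword (s ++ t) = pword s ++ pword t.
Proof. exact: map_cat. Qed.

Lemma positive_pword s : positive (pword s).
Proof. by exists (map inZp s); rewrite -map_comp; apply: beq_refl. Qed.

Definition distant (i j : nat) : bool := [&& i < 4, j < 4 & (i.+1 < j) || (j.+1 < i)].
Definition adjacent (i j : nat) : bool := [&& i < 4, j < 4 & (j == i.+1) || (i == j.+1)].

Lemma pword_comm i j : distant i j -> beq (pword [:: i; j]) (pword [:: j; i]).
Proof.
case/and3P=> hi hj /orP[ij | ji]; first by apply: beq_comm; rewrite /= !modn_small.
by apply: beq_sym; apply: beq_comm; rewrite /= !modn_small.
Qed.

Lemma pword_braid i j : adjacent i j -> beq (pword [:: i; j; i]) (pword [:: j; i; j]).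
Proof.
case/and3P=> hi hj /orP[/eqP ji | /eqP ij].
  by apply: beq_braid; rewrite /= !modn_small.
by apply: beq_sym; apply: beq_braid; rewrite /= !modn_small.
Qed.

Fixpoint braid_move (p : nat) (u : seq nat) : seq nat :=
  match p, u with
  | 0, i :: j :: r =>
      if distant i j then [:: j, i & r] else
      if r is a :: r' then (if adjacent i j && (a == i) then [:: j, i, j & r'] else u)
      else u
  | p.+1, x :: u' => x :: braid_move p u'
  | _, _ => u
  end.

Definition braid_moves (u : seq nat) (ps : seq nat) : seq nat :=
  foldl (fun u p => braid_move p u) u ps.

Lemma braid_move_beq p u : beq (pword u) (pword (braid_move p u)).
Proof.
elim: p u => [|p IHp] [|x u]; try reflexivity; rewrite [braid_move _ _]/=.
  case: u => [|y r]; first reflexivity.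
  case: ifP => [dxy | _].
    rewrite -[x :: y :: r]/([:: x; y] ++ r) -[y :: x :: r]/([:: y; x] ++ r).
    by rewrite !pword_cat pword_comm.
  case: r => [|a r]; first reflexivity.
  case: ifP => [/andP[axy /eqP ->] | _]; last reflexivity.
  rewrite -[x :: y :: x :: r]/([:: x; y; x] ++ r) -[y :: x :: y :: r]/([:: y; x; y] ++ r).
  by rewrite !pword_cat pword_braid.
by rewrite -[x :: u]cat1s -[x :: braid_move p u]cat1s !pword_cat -IHp.
Qed.

Lemma braid_moves_beq u ps : beq (pword u) (pword (braid_moves u ps)).
Proof.
elim: ps u => [|p ps IHps] u /=; first reflexivity.
by rewrite -IHps -braid_move_beq.
Qed.

Lemma beq_by_moves u v ps : braid_moves u ps = v -> beq (pword u) (pword v).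
Proof. by move=> <-; apply: braid_moves_beq. Qed.

Definition strands := (nat * nat * nat * nat * nat)%type.

Definition swap_adj (n : nat) (P : strands) : strands :=
  let: (a, b, c, d, e) := P in
  match n with
  | 0 => (b, a, c, d, e)
  | 1 => (a, c, b, d, e)
  | 2 => (a, b, d, c, e)
  | _ => (a, b, c, e, d)
  end.

Definition act (P : strands) (w : word) : strands :=
  foldl (fun P (l : letter) => swap_adj l.1 P) P w.

Definition inversions (P : strands) : nat :=
  let: (a, b, c, d, e) := P in
  (b < a) + (c < a) + (d < a) + (e < a) + (c < b) + (d < b) + (e < b)
  + (d < c) + (e < c) + (e < d).

Definition npos (w : word) : nat := count (fun l => ~~ l.2) w.
Definition nneg (w : word) : nat := count snd w.

Lemma act_cat P u v : act P (u ++ v) = act (act P u) v.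
Proof. exact: foldl_cat. Qed.

Lemma swap_adjK n : involutive (swap_adj n).
Proof. by case=> [[[[a b] c] d] e]; case: n => [|[|[|[|n]]]]. Qed.

Lemma beq_act u v : beq u v -> forall P, act P u = act P v.
Proof.
elim=> {u v}; first by [].
- by move=> u v _ IH P; rewrite IH.
- by move=> u v w _ IHuv _ IHvw P; rewrite IHuv IHvw.
- by move=> u u' v v' _ IHu _ IHv P; rewrite !act_cat IHu IHv.
- by move=> g b P; rewrite /act /= swap_adjK.
- move=> [i hi] [j hj] /= hij [[[[a b] c] d] e].
  by case: i hi hij => [|[|[|[|i]]]] // _; case: j hj => [|[|[|[|j]]]].
- move=> [i hi] [j hj] /= hij [[[[a b] c] d] e].
  by case: i hi hij => [|[|[|[|i]]]] // _; case: j hj => [|[|[|[|j]]]].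
Qed.

Lemma beq_exponent_sum u v : beq u v -> npos u + nneg v = npos v + nneg u.
Proof.
rewrite /npos /nneg; elim=> {u v}; try done.
- by move=> u v w _ IHuv _ IHvw; lia.
- by move=> u u' v v' _ IHu _ IHv; rewrite !count_cat; lia.
- by move=> g [].
Qed.

Lemma inversions_swap_adj n P : inversions (swap_adj n P) <= (inversions P).+1.
Proof. by case: P => [[[[a b] c] d] e]; case: n => [|[|[|[|n]]]] /=; lia. Qed.

Lemma inversions_act_positive P (w : seq gen) :
  inversions (act P (map pos w)) <= inversions P + size w.
Proof.
elim: w P => [|g w IHw] P /=; first by rewrite addn0.
have := IHw (swap_adj g P); have := inversions_swap_adj g P; rewrite /act /=; lia.
Qed.

Definition id_strands : strands := (0, 1, 2, 3, 4).

Definition length_bound (x : word) : bool :=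
  inversions (act id_strands x) + nneg x <= npos x.

Lemma positive_length_bound x : positive x -> length_bound x.
Proof.
case=> w exw; rewrite /length_bound (beq_act exw).
have := beq_exponent_sum exw; have := inversions_act_positive id_strands w.
rewrite /npos /nneg !count_map count_predT count_pred0 /=; lia.
Qed.

Lemma pword_beq_size s t : beq (pword s) (pword t) -> size s = size t.
Proof.
move/beq_exponent_sum; rewrite /npos /nneg !count_map !count_predT !count_pred0.
lia.
Qed.

Definition Delta_code : seq nat := [:: 0; 1; 2; 3; 0; 1; 2; 0; 1; 0].

Lemma Delta_pword : Delta = pword Delta_code.
Proof. by rewrite /Delta !sg_pword. Qed.

Definition proper_simple (x : word) : Prop :=
  simple x /\ ~ beq x [::] /\ ~ beq x Delta.

Lemma simple_prefix s t : beq (pword (s ++ t)) Delta -> simple (pword s).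
Proof.
move=> eDelta; split; first exact: positive_pword.
by rewrite /prec -eDelta pword_cat catA beq_winv_cat; apply: positive_pword.
Qed.

Lemma proper_simple_prefix s t ps :
  braid_moves (s ++ t) ps = Delta_code -> 0 < size s < 10 -> proper_simple (pword s).
Proof.
move=> /beq_by_moves; rewrite -Delta_pword => eDelta /andP[s_gt0 s_lt10].
split; first exact: simple_prefix eDelta.
split; first by move/(@pword_beq_size s [::]) => /= s_eq0; rewrite s_eq0 in s_gt0.
by rewrite Delta_pword => /pword_beq_size /= s_eq10; rewrite s_eq10 in s_lt10.
Qed.

Definition left_weighted_check (s1 s2 : seq nat) : bool :=
  all (fun i => ~~ (length_bound (winv (pword (rcons s1 i)) ++ pword Delta_code)
                    && length_bound (winv (pword [:: i]) ++ pword s2)))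
      (iota 0 4).

Lemma left_weighted_by_check s1 s2 :
  left_weighted_check s1 s2 -> left_weighted (pword s1) (pword s2).
Proof.
move=> /allP check g [[_ simple_s1g] [simple_gs2 _]].
have /check : nat_of_ord g \in iota 0 4 by rewrite mem_iota ltn_ord.
have pword_g : pword [:: nat_of_ord g] = [:: pos g] by rewrite /pword /= valZpK.
rewrite -cats1 pword_cat pword_g -Delta_pword.
by rewrite (positive_length_bound simple_s1g) (positive_length_bound simple_gs2).
Qed.

Definition factorA : seq nat := [:: 1; 0; 1; 3].
Definition factorB : seq nat := [:: 1; 0; 3; 2; 3].
Definition factorC : seq nat := [:: 2; 3].
Definition factorD : seq nat := [:: 3].

Lemma proper_simple_factorA : proper_simple (pword factorA).
Proof.
exact: (@proper_simple_prefix _ [:: 2; 3; 1; 2; 0; 1] [:: 0; 3; 2; 3; 5; 7]).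
Qed.

Lemma proper_simple_factorB : proper_simple (pword factorB).
Proof.
exact: (@proper_simple_prefix _ [:: 1; 2; 3; 0; 1] [:: 2; 4; 3; 6; 4; 2; 0; 2; 4; 3; 7]).
Qed.

Lemma proper_simple_factorC : proper_simple (pword factorC).
Proof.
exact: (@proper_simple_prefix _ [:: 0; 1; 2; 3; 0; 1; 2; 0] [:: 1; 0; 2; 3; 1; 3; 5; 6; 4; 6]).
Qed.

Lemma proper_simple_factorD : proper_simple (pword factorD).
Proof.
exact: (@proper_simple_prefix _ [:: 0; 1; 2; 3; 0; 1; 2; 0; 1] [:: 0; 1; 2; 4; 5; 7]).
Qed.

Definition beta_factor_codes (k : nat) : seq (seq nat) :=
  nseq (2 * k) factorA ++ [:: factorB, factorC & nseq (2 * k - 3) factorD].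

Lemma beta_factorsE k : beta_factors k = map pword (beta_factor_codes k).
Proof. by rewrite /beta_factors /Delta3 /delta3 !sg_pword // map_cat /= !map_nseq. Qed.

Lemma sorted_beta_factor_codes k : sorted left_weighted_check (beta_factor_codes k).
Proof. by apply: sorted_nseq_cat; vm_compute. Qed.

Lemma size_beta_factors k : 2 <= k -> size (beta_factors k) = 4 * k - 1.
Proof. by move=> k_ge2; rewrite size_cat /= !size_nseq; lia. Qed.

Lemma delta3_cube : beq (wpow delta3 3) (wpow Delta3 2).
Proof.
rewrite /delta3 /Delta3 !sg_pword //.
exact: (@beq_by_moves [:: 1; 0; 1; 0; 1; 0] [:: 1; 0; 1; 1; 0; 1] [:: 3]).
Qed.

Lemma Delta3_sigma4_commute : beq (Delta3 ++ sg 4) (sg 4 ++ Delta3).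
Proof.
rewrite /Delta3 !sg_pword //.
exact: (@beq_by_moves [:: 1; 0; 1; 3] [:: 3; 1; 0; 1] [:: 2; 1; 0]).
Qed.

Lemma sigma4_delta3_commute : beq (sg 4 ++ delta3) (delta3 ++ sg 4).
Proof.
rewrite /delta3 !sg_pword //.
exact: (@beq_by_moves [:: 3; 1; 0] [:: 1; 0; 3] [:: 0; 1]).
Qed.

Lemma sigma4_sigma3_braid :
  beq (wpow (sg 4) 2 ++ sg 3 ++ wpow (sg 4) 2) (sg 4 ++ sg 3 ++ sg 4 ++ sg 3 ++ sg 4).
Proof.
rewrite !sg_pword //.
exact: (@beq_by_moves [:: 3; 3; 2; 3; 3] [:: 3; 2; 3; 2; 3] [:: 1]).
Qed.

Lemma beta_beq_factors k : 2 <= k -> beq (beta k) (flatten (beta_factors k)).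
Proof.
move=> k_ge2.
have -> : beta k = wpow (wpow delta3 3) k ++ delta3 ++ wpow (sg 4) (2 * k)
                   ++ (wpow (sg 4) 2 ++ sg 3 ++ wpow (sg 4) 2) ++ wpow (sg 4) (2 * k - 3).
  have split_exp : 2 * k - 1 = 2 + (2 * k - 3) by lia.
  by rewrite /beta split_exp (wpowD _ (3 * k)) wpowM (wpowD _ (2 * k)) (wpowD _ 2) -!catA.
have -> : flatten (beta_factors k) = wpow (Delta3 ++ sg 4) (2 * k)
    ++ (delta3 ++ sg 4 ++ sg 3 ++ sg 4) ++ (sg 3 ++ sg 4) ++ wpow (sg 4) (2 * k - 3).
  by rewrite /beta_factors !flatten_cat.
rewrite delta3_cube -wpowM (wpow_cat _ Delta3_sigma4_commute) -[X in beq _ X]catA.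
apply: beq_cat => //.
rewrite (catA delta3) -(wpow_commute _ sigma4_delta3_commute) -catA.
apply: beq_cat => //.
by rewrite sigma4_sigma3_braid -!catA.
Qed.

Lemma proper_simple_beta_factors k s :
  s \in beta_factors k -> proper_simple s.
Proof.
rewrite beta_factorsE => /mapP[c + ->]; rewrite mem_cat !inE !mem_nseq.
by case/or4P=> [/andP[_ /eqP ->] | /eqP -> | /eqP -> | /andP[_ /eqP ->]];
  [exact: proper_simple_factorA | exact: proper_simple_factorB
  | exact: proper_simple_factorC | exact: proper_simple_factorD].
Qed.

Lemma left_weighted_beta_factors k i : i.+1 < size (beta_factors k) ->
  left_weighted (nth [::] (beta_factors k) i) (nth [::] (beta_factors k) i.+1).
Proof.
rewrite beta_factorsE size_map => lt_i1; have lt_i := ltnW lt_i1.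
rewrite !(nth_map [::]) //; apply: left_weighted_by_check.
by have /(sortedP [::]) := sorted_beta_factor_codes k; apply.
Qed.

Lemma is_LNF_beta k : 2 <= k -> is_LNF (beta k) 0%Z (beta_factors k).
Proof.
move=> k_ge2; split; first exact: beta_beq_factors.
split; [exact: proper_simple_beta_factors | exact: left_weighted_beta_factors].
Qed.

Theorem mainTheorem2 (k : nat) (hk : (2 <= k)%N) :
  is_LNF (beta k) 0%Z (beta_factors k) /\
  has_inf (beta k) 0%Z /\ has_sup (beta k) (4 * k - 1)%N%:Z.
Proof.
have lnf := is_LNF_beta hk.
split; first exact: lnf.
split; first by exists (beta_factors k).
by exists 0%Z, (beta_factors k); rewrite size_beta_factors // GRing.add0r.
Qed.
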